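(* Let $d\ge1$ be an integer, $c\in[0,\tfrac12)$, $\alpha>1$, and $p\in(0,\tfrac12]$. Let $P$ be the distribution on $[0,1]^d$ placing mass $p$ on the point $(c,\dots,c)$ and mass $1-p$ on $(1-c,\dots,1-c)$, and let $Q$ place mass $1-p$ on $(c,\dots,c)$ and mass $p$ on $(1-c,\dots,1-c)$. Let $K=e^{-2(1/2-c)^2 d}$. If $p+K\le\tfrac12$, then $R_\alpha(\mathrm{Bern}(P),\mathrm{Bern}(Q))\ge r_\alpha(p+K)$.
   Context: For distributions $P,Q$ and $\alpha>1$, $R_\alpha(P,Q)=\frac{1}{\alpha-1}\log\int (dP/dQ)^\alpha\,dQ$ is the Rényi divergence of order $\alpha$. For $p\in[0,1]$, $r_\alpha(p)=\frac{1}{\alpha-1}\log\left(p^\alpha(1-p)^{1-\alpha}+(1-p)^\alpha p^{1-\alpha}\right)$, the Rényi divergence between the two-point distributions $(p,1-p)$ and $(1-p,p)$. For $x\in[0,1]^d$, $\mathrm{Bern}(x)$ is the random vector in $\{0,1\}^d$ with independent coordinates, coordinate $i$ equal to $1$ with probability $x_i$; for a distribution $P$ on $[0,1]^d$, $\mathrm{Bern}(P)$ is the distribution of $\mathrm{Bern}(X)$ with $X\sim P$. *)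

From HB Require Import structures.
From mathcomp Require Import all_boot all_order all_algebra.
From mathcomp Require Import all_classical all_reals all_analysis.
Set Implicit Arguments. Unset Strict Implicit. Unset Printing Implicit Defensive.
Import Order.TTheory GRing.Theory Num.Theory.
Local Open Scope ring_scope.

(* Probability mass function of Bern(x) on {0,1}^d (represented as {ffun 'I_d -> bool}):
   independent coordinates, coordinate i equal to 1 (true) with probability x i. *)
Definition bern_pmf (R : realType) (d : nat) (x : 'I_d -> R)
    (y : {ffun 'I_d -> bool}) : R :=
  \prod_(i < d) (if y i then x i else 1 - x i).

(* Bern(P) for a finitely supported distribution P on [0,1]^d, given as a list of
   (mass, point) pairs: the pmf of Bern(X) with X ~ P. *)
Definition bern_mix (R : realType) (d : nat) (s : seq (R * ('I_d -> R)))
    (y : {ffun 'I_d -> bool}) : R :=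
  \sum_(wx <- s) wx.1 * bern_pmf wx.2 y.

(* Rényi divergence of order alpha > 1 between two distributions on a finite set,
   given by their pmfs: (1/(alpha-1)) log \int (dP/dQ)^alpha dQ, which is +oo when
   P is not absolutely continuous w.r.t. Q. *)
Definition renyi_fin (R : realType) (T : finType) (alpha : R) (P Q : T -> R) : \bar R :=
  if [exists y, (P y != 0) && (Q y == 0)] then +oo%E
  else ((alpha - 1)^-1 *
        ln (\sum_(y | Q y != 0) (P y `^ alpha * Q y `^ (1 - alpha))))%:E.

(* r_alpha(p): Rényi divergence between (p,1-p) and (1-p,p). *)
Definition r_alpha (R : realType) (alpha p : R) : R :=
  (alpha - 1)^-1 *
  ln (p `^ alpha * (1 - p) `^ (1 - alpha) + (1 - p) `^ alpha * p `^ (1 - alpha)).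

From HB Require Import structures.
From mathcomp Require Import all_boot all_order all_algebra.
From mathcomp Require Import all_classical all_reals all_analysis.
From mathcomp Require Import ring lra.
Import Order.TTheory GRing.Theory Num.Theory.
Local Open Scope ring_scope.

(* Flipping every bit swaps the product measures A = Bern(c,...,c) and
   B = Bern(1-c,...,1-c), hence swaps Bern(P) and Bern(Q).  With
   phi(x, y) = x^alpha y^(1-alpha) and psi(x, y) = phi(x, y) + phi(y, x)
   ([renyi_term], [sym_renyi_term]), the Renyi sum of Bern(P) against Bern(Q)
   is therefore half the sum of psi(min(P, Q), max(P, Q)).  As psi is
   subadditive and positively homogeneous, that is at least psi(u, 1 - u),
   where 2u = sum min(P, Q) is the overlap of the two laws, and psi(t, 1 - t)
   decreases on (0, 1/2].  Finally the overlap is at most 2p + sum min(A, B),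
   and sum min(A, B) <= sum sqrt(A B) = (4c(1-c))^(d/2) <= exp(-2(1/2-c)^2 d).
*)

Section RenyiTerm.
Context {R : realType}.
Variable a : R.
Hypothesis a_ge1 : 1 <= a.

Definition renyi_term (x y : R) := x `^ a * y `^ (1 - a).

Definition sym_renyi_term (x y : R) := renyi_term x y + renyi_term y x.

Lemma renyi_term00 : renyi_term 0 0 = 0.
Proof. by rewrite /renyi_term powR0 ?mul0r // gt_eqF // (lt_le_trans ltr01). Qed.

Lemma renyi_termZ k x y : 0 < k -> 0 <= x -> 0 <= y ->
  renyi_term (k * x) (k * y) = k * renyi_term x y.
Proof.
move=> k_gt0 x_ge0 y_ge0; rewrite /renyi_term !powRM ?(ltW k_gt0) //.
rewrite mulrACA -powRD; last by rewrite (gt_eqF k_gt0) implybT.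
by rewrite addrC subrK powRr1 ?(ltW k_gt0).
Qed.

Lemma renyi_term_perspective x y : 0 <= x -> 0 < y ->
  renyi_term x y = y * (x / y) `^ a.
Proof.
move=> x_ge0 y_gt0.
have -> : (x / y) `^ a = renyi_term (x / y) 1 by rewrite /renyi_term powR1 mulr1.
rewrite -renyi_termZ ?divr_ge0 ?(ltW y_gt0) //.
by rewrite mulr1 mulrC divfK ?gt_eqF.
Qed.

Lemma renyi_term_subadd x1 x2 y1 y2 : 0 <= x1 -> 0 <= x2 -> 0 < y1 -> 0 < y2 ->
  renyi_term (x1 + x2) (y1 + y2) <= renyi_term x1 y1 + renyi_term x2 y2.
Proof.
move=> x1_ge0 x2_ge0 y1_gt0 y2_gt0; set s := y1 + y2.
have s_gt0 : 0 < s by rewrite addr_gt0.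
rewrite !renyi_term_perspective ?addr_ge0 //.
pose l := y1 / s.
have l01 : 0 <= l <= 1.
  by rewrite /l divr_ge0 ?(ltW y1_gt0) ?(ltW s_gt0) //= ler_pdivrMr // mul1r lerDl ltW.
have -> : (x1 + x2) / s = l * (x1 / y1) + (1 - l) * (x2 / y2).
  by rewrite /l /s; field; rewrite !gt_eqF.
have -> : y1 * (x1 / y1) `^ a + y2 * (x2 / y2) `^ a =
          s * (l * (x1 / y1) `^ a + (1 - l) * (x2 / y2) `^ a).
  by rewrite /l /s; field; rewrite gt_eqF.
rewrite ler_pM2l //; case/andP: l01 => l_ge0 l_le1.
have := convex_powR a_ge1 (Itv01 l_ge0 l_le1) (x := x1 / y1) (y := x2 / y2).
by rewrite !convRE; apply; rewrite inE /= in_itv /= andbT divr_ge0 // ltW.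
Qed.

Lemma sym_renyi_termC x y : sym_renyi_term x y = sym_renyi_term y x.
Proof. by rewrite /sym_renyi_term addrC. Qed.

Lemma sym_renyi_term00 : sym_renyi_term 0 0 = 0.
Proof. by rewrite /sym_renyi_term renyi_term00 addr0. Qed.

Lemma sym_renyi_term_gt0 x y : 0 < x -> 0 < y -> 0 < sym_renyi_term x y.
Proof. by move=> x_gt0 y_gt0; rewrite addr_gt0 // mulr_gt0 // powR_gt0. Qed.

Lemma sym_renyi_term_min_max x y :
  sym_renyi_term (Num.min x y) (Num.max x y) = sym_renyi_term x y.
Proof. by case: leP => // _; rewrite sym_renyi_termC. Qed.

Lemma sym_renyi_termZ k x y : 0 < k -> 0 <= x -> 0 <= y ->
  sym_renyi_term (k * x) (k * y) = k * sym_renyi_term x y.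
Proof. by move=> *; rewrite /sym_renyi_term !renyi_termZ // mulrDr. Qed.

(* The zero patterns must match: [0 `^ (1 - a) = 0], so [renyi_term x 0] is [0]
   rather than [+oo] when [x > 0]. *)
Lemma sym_renyi_term_subadd x1 x2 y1 y2 :
  0 <= x1 -> 0 <= x2 -> 0 <= y1 -> 0 <= y2 ->
  (x1 == 0) = (y1 == 0) -> (x2 == 0) = (y2 == 0) ->
  sym_renyi_term (x1 + x2) (y1 + y2) <= sym_renyi_term x1 y1 + sym_renyi_term x2 y2.
Proof.
move=> x1_ge0 x2_ge0 y1_ge0 y2_ge0.
have [-> /esym/eqP -> _|x1_neq0 y1_neq0] := eqVneq x1 0.
  by rewrite !add0r sym_renyi_term00 add0r.
have [-> /esym/eqP -> |x2_neq0 y2_neq0] := eqVneq x2 0.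
  by rewrite !addr0 sym_renyi_term00 addr0.
have pos z : 0 <= z -> z != 0 -> 0 < z by rewrite lt_def => -> ->.
rewrite /sym_renyi_term addrACA lerD // renyi_term_subadd // pos //.
- by rewrite -y1_neq0.
- by rewrite -y2_neq0.
Qed.

Lemma sym_renyi_term_sum (I : Type) (r : seq I) (x y : I -> R) :
  (forall i, 0 <= x i) -> (forall i, 0 <= y i) ->
  (forall i, (x i == 0) = (y i == 0)) ->
  sym_renyi_term (\sum_(i <- r) x i) (\sum_(i <- r) y i) <=
  \sum_(i <- r) sym_renyi_term (x i) (y i).
Proof.
move=> x_ge0 y_ge0 xy0.
pose K X Y Z := [/\ 0 <= X, 0 <= Y, (X == 0) = (Y == 0) & sym_renyi_term X Y <= Z].
suff [] : K (\sum_(i <- r) x i) (\sum_(i <- r) y i)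
            (\sum_(i <- r) sym_renyi_term (x i) (y i)) by [].
apply: big_rec3; first by rewrite /K sym_renyi_term00 !eqxx.
move=> i X Y Z _ [X_ge0 Y_ge0 XY0 le_XYZ]; split; rewrite ?addr_ge0 //.
- by rewrite !paddr_eq0 // xy0 XY0.
- by apply: le_trans (lerD (lexx _) le_XYZ); apply: sym_renyi_term_subadd.
Qed.

(* [t |-> sym_renyi_term t (1 - t)] is convex and symmetric about [1/2]. *)
Lemma sym_renyi_term_compl_le u v : 0 < u -> u <= v -> v <= 1 / 2 ->
  sym_renyi_term v (1 - v) <= sym_renyi_term u (1 - u).
Proof.
move=> u_gt0 le_uv v_le_half.
have [-> //|neq_uv] := eqVneq u v.
have lt_uv : u < v by rewrite lt_neqAle neq_uv le_uv.
pose l := (1 - u - v) / (1 - 2 * u).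
have gap_gt0 : 0 < 1 - 2 * u by lra.
have l_gt0 : 0 < l by rewrite divr_gt0 //; lra.
have l_lt1 : 0 < 1 - l by rewrite subr_gt0 ltr_pdivrMr // mul1r; lra.
have -> : v = l * u + (1 - l) * (1 - u) by rewrite /l; field; lra.
have -> : 1 - (l * u + (1 - l) * (1 - u)) = l * (1 - u) + (1 - l) * u.
  by rewrite /l; field; lra.
have [lu1 lu2 lu3 lu4] : [/\ 0 < l * u, 0 < (1 - l) * (1 - u),
                           0 < l * (1 - u) & 0 < (1 - l) * u].
  by split; apply: mulr_gt0 => //; lra.
apply: le_trans (sym_renyi_term_subadd _ _ _ _ (ltW lu1) (ltW lu2) (ltW lu3) (ltW lu4)
                   _ _) _; rewrite ?gt_eqF //.
rewrite !sym_renyi_termZ //; try lra.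
by rewrite (sym_renyi_termC (1 - u)) -mulrDl subrKC mul1r.
Qed.

End RenyiTerm.

Lemma r_alphaE (R : realType) (alpha p : R) :
  r_alpha alpha p = (alpha - 1)^-1 * ln (sym_renyi_term alpha p (1 - p)).
Proof. by []. Qed.

Section RenyiSwap.
Context {R : realType} {T : finType}.
Variables (sigma : T -> T) (P : T -> R).
Hypotheses (sigmaK : involutive sigma) (P_ge0 : forall y, 0 <= P y)
  (P_sum1 : \sum_y P y = 1).

Lemma sum_swap (F : T -> R) : \sum_y F (sigma y) = \sum_y F y.
Proof. exact: esym (reindex_inj (can_inj sigmaK)). Qed.

Lemma sum_min_add_max_swap :
  \sum_y Num.min (P y) (P (sigma y)) + \sum_y Num.max (P y) (P (sigma y)) = 2.
Proof.
rewrite -big_split /= (eq_bigr (fun y => P y + P (sigma y))); last first.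
  by move=> y _; case: leP => // _; rewrite addrC.
by rewrite big_split /= sum_swap P_sum1.
Qed.

Section Support.
Hypothesis supp : forall y, (P y == 0) = (P (sigma y) == 0).

Lemma sum_min_swap_gt0 : 0 < \sum_y Num.min (P y) (P (sigma y)).
Proof.
have min_ge0 y : 0 <= Num.min (P y) (P (sigma y)) by rewrite le_min !P_ge0.
rewrite lt_def sumr_ge0 ?andbT //.
apply/eqP => /(psumr_eq0P (fun y _ => min_ge0 y)) min0.
suff P0 y : P y = 0 by move: P_sum1; rewrite big1 // => /eqP; rewrite eq_sym oner_eq0.
by apply/eqP; move: (min0 y isT); case: leP => _ /eqP //; rewrite supp.
Qed.

Lemma sum_renyi_term_swap alpha : 1 <= alpha ->
  2 * \sum_(y | P (sigma y) != 0) renyi_term alpha (P y) (P (sigma y)) =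
  \sum_y sym_renyi_term alpha (Num.min (P y) (P (sigma y)))
                              (Num.max (P y) (P (sigma y))).
Proof.
move=> alpha_ge1.
have -> : \sum_(y | P (sigma y) != 0) renyi_term alpha (P y) (P (sigma y)) =
          \sum_y renyi_term alpha (P y) (P (sigma y)).
  rewrite big_mkcond; apply: eq_bigr => y _; case: ifPn => // /negPn/eqP Psy0.
  have /eqP Py0 : P y == 0 by rewrite supp Psy0.
  by rewrite Py0 Psy0 renyi_term00.
rewrite mulr_natl mulr2n -{2}(sum_swap (fun y => renyi_term alpha (P y) (P (sigma y)))).
by rewrite -big_split; apply: eq_bigr => y _; rewrite sigmaK sym_renyi_term_min_max.
Qed.

End Support.

Lemma renyi_fin_swap_ge alpha v : 1 < alpha -> 0 < v -> v <= 1 / 2 ->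
  \sum_y Num.min (P y) (P (sigma y)) <= 2 * v ->
  ((r_alpha alpha v)%:E <= renyi_fin alpha P (P \o sigma))%E.
Proof.
move=> alpha_gt1 v_gt0 v_le_half overlap.
rewrite /renyi_fin; case: ifPn => [_|/existsPn abs_cont]; first exact: leey.
have supp y : (P y == 0) = (P (sigma y) == 0).
  move: (abs_cont y) (abs_cont (sigma y)); rewrite /= sigmaK.
  by case: eqP; case: eqP.
set X := \sum_y Num.min _ _ in overlap.
have X_gt0 : 0 < X := sum_min_swap_gt0 supp.
have key : sym_renyi_term alpha (X / 2) (1 - X / 2) <=
           \sum_(y | P (sigma y) != 0) renyi_term alpha (P y) (P (sigma y)).
  rewrite -(ler_pM2l (_ : 0 < 2)) // sum_renyi_term_swap ?(ltW alpha_gt1) //.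
  rewrite -sym_renyi_termZ ?(ltW alpha_gt1) //; [|lra|lra].
  have -> : 2 * (X / 2) = X by field.
  have -> : 2 * (1 - X / 2) = \sum_y Num.max (P y) (P (sigma y)).
    by have := sum_min_add_max_swap; rewrite -/X; lra.
  apply: (sym_renyi_term_sum _ (ltW alpha_gt1)) => y.
  - by rewrite le_min !P_ge0.
  - by rewrite le_max !P_ge0.
  - by case: leP => _; [exact: supp | exact/esym/supp].
rewrite lee_fin r_alphaE ler_pM2l ?invr_gt0 ?subr_gt0 //.
have sym_gt0 : 0 < sym_renyi_term alpha v (1 - v) by apply: sym_renyi_term_gt0; lra.
have le_sym : sym_renyi_term alpha v (1 - v) <= sym_renyi_term alpha (X / 2) (1 - X / 2).
  by apply: sym_renyi_term_compl_le; lra.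
rewrite ler_ln ?posrE //; first exact: le_trans key.
exact: lt_le_trans sym_gt0 (le_trans le_sym key).
Qed.

End RenyiSwap.

Lemma min_mix2_le (R : realFieldType) (p x y : R) :
  Num.min (p * x + (1 - p) * y) (p * y + (1 - p) * x) <=
  p * (x + y) + (1 - 2 * p) * Num.min x y.
Proof.
have [_|_] := leP x y; rewrite ge_min.
- have -> : p * (x + y) + (1 - 2 * p) * x = p * y + (1 - p) * x by ring.
  by rewrite lexx orbT.
- have -> : p * (x + y) + (1 - 2 * p) * y = p * x + (1 - p) * y by ring.
  by rewrite lexx.
Qed.

Lemma bernoulli_var_le_expR (R : realType) (c : R) :
  c * (1 - c) <= expR (- (4 * (1 / 2 - c) ^+ 2)) / 4.
Proof.
rewrite ler_pdivlMr //; have -> : c * (1 - c) * 4 = 1 - 4 * (1 / 2 - c) ^+ 2 by field.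
exact: expR_ge1Dx.
Qed.

Section BernoulliProduct.
Context {R : realType} {d : nat}.
Implicit Types (x : 'I_d -> R) (y : {ffun 'I_d -> bool}).

Definition flip y : {ffun 'I_d -> bool} := [ffun i => ~~ y i].

Lemma flipK : involutive flip.
Proof. by move=> y; apply/ffunP => i; rewrite !ffunE negbK. Qed.

Lemma bern_pmf_ge0 x y : (forall i, 0 <= x i <= 1) -> 0 <= bern_pmf x y.
Proof.
move=> x01; apply: prodr_ge0 => i _; case/andP: (x01 i) => x_ge0 x_le1.
by case: (y i); rewrite ?subr_ge0.
Qed.

Lemma bern_pmf_sum1 x : \sum_y bern_pmf x y = 1.
Proof.
rewrite -(bigA_distr_bigA (fun i (b : bool) => if b then x i else 1 - x i)).
by rewrite big1 // => i _; rewrite big_bool /= subrKC.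
Qed.

Lemma bern_pmf_flip x y : bern_pmf x (flip y) = bern_pmf (fun i => 1 - x i) y.
Proof. by apply: eq_bigr => i _; rewrite ffunE; case: (y i); rewrite /= ?subKr. Qed.

Lemma bern_pmf_cst_flip (c : R) y :
  bern_pmf (fun _ : 'I_d => 1 - c) (flip y) = bern_pmf (fun _ => c) y.
Proof. by rewrite -[in RHS](flipK y) (bern_pmf_flip _ (flip y)). Qed.

Lemma bern_mix2E (p q : R) x1 x2 y :
  bern_mix [:: (p, x1); (q, x2)] y = p * bern_pmf x1 y + q * bern_pmf x2 y.
Proof. by rewrite /bern_mix !big_cons big_nil addr0. Qed.

Lemma sum_bern_mix (s : seq (R * ('I_d -> R))) :
  \sum_y bern_mix s y = \sum_(wx <- s) wx.1.
Proof.
rewrite /bern_mix exchange_big /=; apply: eq_bigr => wx _.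
by rewrite -mulr_sumr bern_pmf_sum1 mulr1.
Qed.

Lemma bern_pmf_cstM (c : R) y :
  bern_pmf (fun _ : 'I_d => c) y * bern_pmf (fun _ => 1 - c) y = (c * (1 - c)) ^+ d.
Proof.
rewrite -big_split /= (eq_bigr (fun _ => c * (1 - c))) ?prodr_const ?card_ord //.
by move=> i _; case: (y i); rewrite ?subKr // mulrC.
Qed.

(* Bhattacharyya bound: [min(a, b)^2 <= a b] and [A y * B y = (c (1 - c))^d]. *)
Lemma sum_min_bern_pmf_cst (c : R) : 0 <= c <= 1 ->
  \sum_y Num.min (bern_pmf (fun _ : 'I_d => c) y) (bern_pmf (fun _ => 1 - c) y) <=
  expR (- (2 * (1 / 2 - c) ^+ 2 * d%:R)).
Proof.
case/andP=> c_ge0 c_le1; set K := expR _.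
set A := bern_pmf (fun _ : 'I_d => c); set B := bern_pmf (fun _ : 'I_d => 1 - c).
have A_ge0 y : 0 <= A y by apply: bern_pmf_ge0 => _; rewrite c_ge0 c_le1.
have B_ge0 y : 0 <= B y by apply: bern_pmf_ge0 => _; apply/andP; split; lra.
have min_le y : Num.min (A y) (B y) <= K / 2 ^+ d.
  rewrite -ler_sqr ?nnegrE ?le_min ?A_ge0 ?B_ge0 ?divr_ge0 ?expR_ge0 ?exprn_ge0 //.
  apply: (@le_trans _ _ (A y * B y)).
    by rewrite expr2 ler_pM ?le_min ?A_ge0 ?B_ge0 // ge_min lexx ?orbT.
  have -> : (K / 2 ^+ d) ^+ 2 = (expR (- (4 * (1 / 2 - c) ^+ 2)) / 4) ^+ d.
    rewrite !expr_div_n -exprM mulnC exprM /K -!expRM_natr.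
    by congr (_ / _); [congr expR | congr (_ ^+ _)]; ring.
  rewrite bern_pmf_cstM; apply: lerXn2r; last exact: bernoulli_var_le_expR.
  - by rewrite nnegrE mulr_ge0 // subr_ge0.
  - by rewrite nnegrE divr_ge0 // expR_ge0.
apply: le_trans (ler_sum _ (fun y _ => min_le y)) _.
rewrite sumr_const card_ffun card_bool card_ord -(mulr_natr (K / 2 ^+ d)) natrX.
by rewrite divfK.
Qed.

Definition bern_mix2_cst (p c : R) :=
  bern_mix [:: (p, fun _ : 'I_d => c); (1 - p, fun _ => 1 - c)].

Lemma bern_mix2_cst_flip (p c : R) :
  bern_mix [:: (1 - p, fun _ : 'I_d => c); (p, fun _ => 1 - c)] =
  bern_mix2_cst p c \o flip.
Proof.
apply: funext => y /=; rewrite /bern_mix2_cst !bern_mix2E.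
by rewrite bern_pmf_flip bern_pmf_cst_flip addrC.
Qed.

Lemma bern_mix2_cst_ge0 (p c : R) y : 0 <= p <= 1 -> 0 <= c <= 1 ->
  0 <= bern_mix2_cst p c y.
Proof.
case/andP=> p_ge0 p_le1 c01.
have c'01 : 0 <= 1 - c <= 1 by case/andP: c01 => *; apply/andP; split; lra.
rewrite /bern_mix2_cst bern_mix2E addr_ge0 // mulr_ge0 ?subr_ge0 //.
- exact: bern_pmf_ge0 (fun _ => c01).
- exact: bern_pmf_ge0 (fun _ => c'01).
Qed.

Lemma bern_mix2_cst_sum1 (p c : R) : \sum_y bern_mix2_cst p c y = 1.
Proof. by rewrite sum_bern_mix !big_cons big_nil /= addr0 subrKC. Qed.

Lemma sum_min_bern_mix2_flip (p c : R) : 0 <= p <= 1 / 2 -> 0 <= c <= 1 ->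
  \sum_y Num.min (bern_mix2_cst p c y) (bern_mix2_cst p c (flip y)) <=
  2 * p + expR (- (2 * (1 / 2 - c) ^+ 2 * d%:R)).
Proof.
case/andP=> p_ge0 p_le_half c01; set P := bern_mix2_cst p c.
set A := bern_pmf (fun _ : 'I_d => c); set B := bern_pmf (fun _ : 'I_d => 1 - c).
have min_le y : Num.min (P y) (P (flip y)) <=
                p * (A y + B y) + (1 - 2 * p) * Num.min (A y) (B y).
  rewrite /P /bern_mix2_cst /A /B !bern_mix2E bern_pmf_flip bern_pmf_cst_flip.
  exact: min_mix2_le.
have S_ge0 : 0 <= \sum_y Num.min (A y) (B y).
  by apply: sumr_ge0 => y _; rewrite le_min !bern_pmf_ge0 // => _; apply/andP; split; lra.
have S_le := sum_min_bern_pmf_cst c c01; rewrite -/A -/B in S_le.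
apply: le_trans (ler_sum _ (fun y _ => min_le y)) _.
rewrite big_split /= -!mulr_sumr big_split /= !bern_pmf_sum1.
nra.
Qed.

End BernoulliProduct.

Theorem theorem2 (R : realType) (d : nat) (c alpha p : R) :
  (1 <= d)%N -> 0 <= c -> c < 1 / 2 -> 1 < alpha -> 0 < p -> p <= 1 / 2 ->
  p + expR (- (2 * (1 / 2 - c) ^+ 2 * d%:R)) <= 1 / 2 ->
  ((r_alpha alpha (p + expR (- (2 * (1 / 2 - c) ^+ 2 * d%:R))))%:E <=
   renyi_fin alpha
     (bern_mix [:: (p, fun _ : 'I_d => c); (1 - p, fun _ : 'I_d => 1 - c)])
     (bern_mix [:: (1 - p, fun _ : 'I_d => c); (p, fun _ : 'I_d => 1 - c)]))%O.
Proof.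
move=> _ c_ge0 c_lt_half alpha_gt1 p_gt0 p_le_half.
set K := expR _ => v_le_half.
have K_gt0 : 0 < K := expR_gt0 _.
have c01 : 0 <= c <= 1 by apply/andP; split; lra.
have p01 : 0 <= p <= 1 / 2 by apply/andP; split; lra.
rewrite bern_mix2_cst_flip; apply: renyi_fin_swap_ge => //; try lra.
- exact: flipK.
- by move=> y; apply: bern_mix2_cst_ge0 => //; apply/andP; split; lra.
- exact: bern_mix2_cst_sum1.
- by apply: le_trans (sum_min_bern_mix2_flip _ _ p01 c01) _; rewrite -/K; lra.
Qed.
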